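(* Let $K\ge 2$ and $M\ge 1$ be integers. For $m\in[M]$ let $\boldsymbol{A}_m\in\mathbb{R}^{K\times K}$ be a confusion matrix (entrywise nonnegative, each column summing to one), let $\boldsymbol{\lambda}\in\mathbb{R}^K$ be a probability vector, $\boldsymbol{D}=\mathrm{Diag}(\boldsymbol{\lambda})$, and set $$\boldsymbol{H}=[\boldsymbol{A}_1^{\top},\ldots,\boldsymbol{A}_M^{\top}]^{\top}\boldsymbol{D}^{1/2}\in\mathbb{R}^{MK\times K},\qquad \boldsymbol{X}=\boldsymbol{H}\boldsymbol{H}^{\top},$$ i.e. $\boldsymbol{X}$ is the $MK\times MK$ block matrix whose $(m,j)$-th $K\times K$ block is $\boldsymbol{R}_{m,j}=\boldsymbol{A}_m\boldsymbol{D}\boldsymbol{A}_j^{\top}$ for all $m,j\in[M]$. Assume that $\boldsymbol{H}$ satisfies the sufficiently scattered condition (SSC), that $\mathrm{rank}(\boldsymbol{H})=K$, and that $\boldsymbol{X}$ is available. Then all the confusion matrices and the prior are identified uniquely by symmetric nonnegative matrix factorization of $\boldsymbol{X}$ up to a common column permutation: for any $\boldsymbol{H}^\star\in\mathbb{R}^{MK\times K}$ with $\boldsymbol{H}^\star\ge\boldsymbol{0}$ and $\boldsymbol{X}=\boldsymbol{H}^\star(\boldsymbol{H}^\star)^{\top}$, there is a permutation matrix $\boldsymbol{\Pi}$ such that $\boldsymbol{A}_m^\star=\boldsymbol{A}_m\boldsymbol{\Pi}$ for all $m\in[M]$ and $\boldsymbol{\lambda}^\star=\boldsymbol{\Pi}^{\top}\boldsymbol{\lambda}$,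 where $\boldsymbol{A}^\star_m$ denotes the $m$-th $K\times K$ row block of $\boldsymbol{H}^\star$ with each column normalized to unit $\ell_1$ norm, and $\boldsymbol{\lambda}^\star$ is the prior estimate obtained from $\boldsymbol{H}^\star$, i.e. $\boldsymbol{H}^\star=[(\boldsymbol{A}_1^\star)^{\top},\ldots,(\boldsymbol{A}_M^\star)^{\top}]^{\top}\mathrm{Diag}(\boldsymbol{\lambda}^\star)^{1/2}$.
   Context: Sufficiently scattered condition (SSC): a nonnegative matrix $\boldsymbol{Z}\in\mathbb{R}^{I\times K}_+$ satisfies the SSC if (i) $\mathcal{C}\subseteq \mathrm{cone}(\boldsymbol{Z}^{\top})$, where $\mathcal{C}=\{\boldsymbol{x}\in\mathbb{R}^K:\ \boldsymbol{x}^{\top}\mathbf{1}\ge\sqrt{K-1}\,\|\boldsymbol{x}\|_2\}$ and $\mathrm{cone}(\boldsymbol{Z}^{\top})=\{\boldsymbol{Z}^{\top}\boldsymbol{\theta}:\boldsymbol{\theta}\ge \boldsymbol{0}\}$ is the conic hull of the rows of $\boldsymbol{Z}$; and (ii) $\mathrm{cone}(\boldsymbol{Z}^{\top})\not\subseteq\mathrm{cone}(\boldsymbol{Q})$ for any orthonormal $\boldsymbol{Q}\in\mathbb{R}^{K\times K}$ other than permutation matrices. In the Dawid–Skene model, $\boldsymbol{A}_m(k',k)=\Pr(X_m=k'\mid Y=k)$ is the probability that annotator $m$ outputs label $k'$ when the true label is $k$, and $\boldsymbol{\lambda}(k)=\Pr(Y=k)$. *)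

From HB Require Import structures.
From mathcomp Require Import all_boot all_order all_algebra all_fingroup.
From mathcomp Require Import reals.
Set Implicit Arguments. Unset Strict Implicit. Unset Printing Implicit Defensive.
Import Order.TTheory GRing.Theory Num.Theory.
Local Open Scope ring_scope.

Section Defs.
Variable R : realType.

(* A is a K x K confusion matrix: A(k',k) = Pr(X = k' | Y = k);
   entrywise nonnegative, each column sums to one. *)
Definition confusion_mx (K : nat) (A : 'M[R]_K) : Prop :=
  (forall i j, 0 <= A i j) /\ (forall j, \sum_i A i j = 1).

Definition prob_vec (K : nat) (l : 'cV[R]_K) : Prop :=
  (forall k, 0 <= l k 0) /\ \sum_k l k 0 = 1.

(* Rows of an (M*K) x K matrix are indexed by pairs (m, k') via mxvec_index m k'
   (a bijection 'I_M * 'I_K -> 'I_(M*K)); the m-th K x K row block. *)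
Definition blk (M K : nat) (H : 'M[R]_(M * K, K)) (m : 'I_M) : 'M[R]_K :=
  \matrix_(k', k) H (mxvec_index m k') k.

Definition stack (M K : nat) (B : 'I_M -> 'M[R]_K) : 'M[R]_(M * K, K) :=
  \matrix_(i, k) (let p := enum_val (cast_ord (esym (mxvec_cast M K)) i) in
                  B p.1 p.2 k).

Definition Dhalf (K : nat) (l : 'cV[R]_K) : 'M[R]_K :=
  diag_mx (\row_k Num.sqrt (l k 0)).

Definition Hmat (M K : nat) (A : 'I_M -> 'M[R]_K) (l : 'cV[R]_K) : 'M[R]_(M * K, K) :=
  stack A *m Dhalf l.

Definition cone_cols (n p : nat) (B : 'M[R]_(n, p)) (x : 'cV[R]_n) : Prop :=
  exists theta : 'cV[R]_p, (forall i, 0 <= theta i 0) /\ x = B *m theta.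

Definition socC (K : nat) (x : 'cV[R]_K) : Prop :=
  Num.sqrt (K.-1)%:R * Num.sqrt (\sum_k x k 0 ^+ 2) <= \sum_k x k 0.

Definition SSC (I K : nat) (Z : 'M[R]_(I, K)) : Prop :=
  (forall x, socC x -> cone_cols Z^T x) /\
  (forall Q : 'M[R]_K, Q *m Q^T = 1%:M ->
     (forall x, cone_cols Z^T x -> cone_cols Q x) -> is_perm_mx Q).

Definition Aest (M K : nat) (Hs : 'M[R]_(M * K, K)) (m : 'I_M) : 'M[R]_K :=
  \matrix_(k', k) (blk Hs m k' k / \sum_k'' `|blk Hs m k'' k|).

(* lambda_star read off from block m of Hs: Hs_m = A*_m Diag(lambda_star)^{1/2},
   so lambda_star(k) = (l1 norm of column k of block m)^2 *)
Definition lamest (M K : nat) (Hs : 'M[R]_(M * K, K)) (m : 'I_M) : 'cV[R]_K :=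
  \col_k ((\sum_k' `|blk Hs m k' k|) ^+ 2).

End Defs.

From HB Require Import structures.
From mathcomp Require Import all_boot all_order all_algebra all_fingroup.
From mathcomp Require Import reals.

Set Implicit Arguments.
Unset Strict Implicit.
Unset Printing Implicit Defensive.
Import Order.TTheory GRing.Theory Num.Theory.
Local Open Scope ring_scope.

(* Since H has full column rank, any other Gram factor of X = H H^T is H Q
   with Q orthogonal. If Hs >= 0, then every x = H^T t with t >= 0 equals
   Q (Hs^T t) with Hs^T t >= 0, so cone(H^T) lies in cone(Q) and the SSC
   forces Q to be a permutation. Reading the blocks of H Pi column by column,
   the l1 norms recover sqrt(lambda) (the columns of each A_m sum to one),
   and normalizing recovers A_m Pi; rank K rules out a zero column of H,
   hence a zero entry of lambda, so that this normalization is well defined. *)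

Lemma mulmx_perm_mxE (R : pzSemiRingType) m n (B : 'M[R]_(m, n)) (s : 'S_n) i j :
  (B *m perm_mx s) i j = B i (s^-1 j)%g.
Proof. by rewrite -[s in perm_mx s]invgK -col_permE mxE. Qed.

Section GramFactor.
Variable R : realFieldType.

Lemma mulmx_trmx_eq0 m n (E : 'M[R]_(m, n)) : E *m E^T = 0 -> E = 0.
Proof.
move=> EEt0; apply/matrixP=> i j; rewrite mxE.
have : \sum_k E i k ^+ 2 = (E *m E^T) i i.
  by rewrite mxE; apply: eq_bigr => k _; rewrite mxE.
rewrite EEt0 mxE.
move=> /(psumr_eq0P (fun k _ => sqr_ge0 (E i k))) /(_ j isT) /eqP.
by rewrite sqrf_eq0 => /eqP.
Qed.

Lemma gram_factor_orthogonal n p (H Hs : 'M[R]_(n, p)) :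
  row_full H -> Hs *m Hs^T = H *m H^T ->
  exists2 Q : 'M[R]_p, Q *m Q^T = 1%:M & Hs = H *m Q.
Proof.
move=> /mulVpmx LH1 gram; set L := pinvmx H in LH1.
exists (L *m Hs).
  by rewrite trmx_mul mulmxA -(mulmxA L) gram mulmxA LH1 mul1mx -trmx_mul LH1 trmx1.
pose P := 1%:M - H *m L.
have PH0 : P *m H = 0 by rewrite mulmxBl mul1mx -mulmxA LH1 mulmx1 subrr.
apply/eqP; rewrite -subr_eq0; apply/eqP/mulmx_trmx_eq0.
have -> : Hs - H *m (L *m Hs) = P *m Hs by rewrite mulmxBl mul1mx mulmxA.
by rewrite trmx_mul mulmxA -(mulmxA P) gram mulmxA PH0 !mul0mx.
Qed.

Lemma row_full_col_neq0 n p (B : 'M[R]_(n, p)) k : row_full B -> col k B != 0.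
Proof.
case/row_fullP=> L LB1; apply: contraTneq isT => Bk0.
have : col k (L *m B) k 0 = 1 by rewrite LB1 !mxE eqxx.
by rewrite colE -mulmxA -colE Bk0 mulmx0 mxE => /eqP; rewrite eq_sym oner_eq0.
Qed.

End GramFactor.

Section SymmetricNMF.
Variable R : realType.

Lemma cone_trmx_sub_orthogonal n p (H Hs : 'M[R]_(n, p)) (Q : 'M[R]_p) :
  (forall i k, 0 <= Hs i k) -> Q *m Q^T = 1%:M -> Hs = H *m Q ->
  forall x, cone_cols H^T x -> cone_cols Q x.
Proof.
move=> Hs_ge0 QQt1 HsE x [t [t_ge0 ->]]; exists (Hs^T *m t); split.
  by move=> i; rewrite mxE sumr_ge0 // => k _; rewrite mxE mulr_ge0.
by rewrite HsE trmx_mul -!mulmxA [Q *m _]mulmxA QQt1 mul1mx.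
Qed.

Lemma SSC_gram_factor_perm n p (H Hs : 'M[R]_(n, p)) :
  SSC H -> row_full H -> (forall i k, 0 <= Hs i k) ->
  Hs *m Hs^T = H *m H^T -> exists s : 'S_p, Hs = H *m perm_mx s.
Proof.
move=> [_ ssc] H_full Hs_ge0 /(gram_factor_orthogonal H_full) [Q QQt1 HsE].
have /is_perm_mxP [s QE] := ssc Q QQt1 (cone_trmx_sub_orthogonal Hs_ge0 QQt1 HsE).
by exists s; rewrite HsE QE.
Qed.

End SymmetricNMF.

Section DawidSkene.
Variables (R : realType) (M K : nat) (A : 'I_M -> 'M[R]_K) (lam : 'cV[R]_K).

Lemma HmatE m k' k :
  Hmat A lam (mxvec_index m k') k = A m k' k * Num.sqrt (lam k 0).
Proof.
by rewrite /Hmat /Dhalf mul_mx_diag !mxE /mxvec_index cast_ordK enum_rankK.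
Qed.

Lemma row_full_Hmat_lam_gt0 k :
  (forall k, 0 <= lam k 0) -> row_full (Hmat A lam) -> 0 < lam k 0.
Proof.
move=> lam_ge0 /(row_full_col_neq0 k); rewrite lt0r lam_ge0 andbT.
apply: contraNneq => lamk0; apply/eqP/matrixP => i j.
by case/mxvec_indexP: i => m k'; rewrite [LHS]mxE HmatE lamk0 sqrtr0 mulr0 mxE.
Qed.

Section Permuted.
Variable s : 'S_K.
Hypothesis A_confusion : forall m, confusion_mx (A m).
Hypothesis lam_ge0 : forall k, 0 <= lam k 0.

Let Hs := Hmat A lam *m perm_mx s.

Lemma blk_Hmat_perm m k' k :
  blk Hs m k' k = A m k' (s^-1 k)%g * Num.sqrt (lam (s^-1 k)%g 0).
Proof. by rewrite mxE mulmx_perm_mxE HmatE. Qed.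

Lemma blk_Hmat_perm_col_norm m k :
  \sum_k' `|blk Hs m k' k| = Num.sqrt (lam (s^-1 k)%g 0).
Proof.
have [A_ge0 A_col1] := A_confusion m.
under eq_bigr => k' _ do rewrite blk_Hmat_perm ger0_norm ?mulr_ge0 ?sqrtr_ge0 //.
by rewrite -mulr_suml A_col1 mul1r.
Qed.

Lemma Aest_Hmat_perm (lam_gt0 : forall k, 0 < lam k 0) m :
  Aest Hs m = A m *m perm_mx s.
Proof.
apply/matrixP => k' k.
rewrite mxE blk_Hmat_perm_col_norm blk_Hmat_perm mulmx_perm_mxE mulfK //.
by rewrite sqrtr_eq0 -ltNge.
Qed.

Lemma lamest_Hmat_perm m : lamest Hs m = (perm_mx s)^T *m lam.
Proof.
apply/matrixP => k j; rewrite (ord1 j) mxE blk_Hmat_perm_col_norm sqr_sqrtr //.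
by rewrite tr_perm_mx -row_permE mxE.
Qed.

End Permuted.
End DawidSkene.

Theorem proposition1 (R : realType) (K M : nat) (A : 'I_M -> 'M[R]_K)
    (lam : 'cV[R]_K) :
  (2 <= K)%N -> (1 <= M)%N ->
  (forall m, confusion_mx (A m)) -> prob_vec lam ->
  SSC (Hmat A lam) -> \rank (Hmat A lam) = K ->
  forall Hs : 'M[R]_(M * K, K),
    (forall i k, 0 <= Hs i k) ->
    Hs *m Hs^T = Hmat A lam *m (Hmat A lam)^T ->
    exists s : 'S_K,
      (forall m, Aest Hs m = A m *m perm_mx s) /\
      (forall m, lamest Hs m = (perm_mx s)^T *m lam).
Proof.
move=> _ _ A_confusion [lam_ge0 _] ssc rankH Hs Hs_ge0 gram.
have H_full : row_full (Hmat A lam) by rewrite /row_full rankH.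
have [s ->] := SSC_gram_factor_perm ssc H_full Hs_ge0 gram.
have lam_gt0 k := row_full_Hmat_lam_gt0 k lam_ge0 H_full.
exists s; split=> m.
- exact: Aest_Hmat_perm.
- exact: lamest_Hmat_perm.
Qed.
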